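(* Let $\Gamma$ be a Lie group with a left invariant metric, $\Gamma_0\triangleleft\Gamma$ the connected component of the identity, $\Gamma_i$ a sequence of discrete groups, and $f_i:\Gamma_i\to\Gamma$ a discrete approximation. Let $r>0$ be such that $B_e(r,\Gamma)\subset\Gamma_0$, and for each $i$ let $G_i\leq\Gamma_i$ be the subgroup generated by $f_i^{-1}(B_e(r,\Gamma))$. Then for $i$ large enough, $G_i$ is a normal subgroup of $\Gamma_i$.
   Context: A sequence of functions $f_i:\Gamma_i\to\Gamma$ is a discrete approximation if there is $R_0>0$ such that for large $i$, $f_i^{-1}(B_e(R_0,\Gamma))$ is a generating set of $\Gamma_i$ containing the identity, and for every $R>0$, $\varepsilon>0$ there is $i_0$ such that for all $i\geq i_0$: (1) $f_i^{-1}(B_e(R,\Gamma))$ is finite; (2) $f_i(\Gamma_i)$ intersects each ball of radius $\varepsilon$ centered at a point of $B_e(R,\Gamma)$; (3) for all $g_1,g_2\in f_i^{-1}(B_e(R,\Gamma))$, $d(f_i(g_1g_2^{-1}),f_i(g_1)f_i(g_2^{-1}))\leq\varepsilon$. *)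

From HB Require Import structures.
From mathcomp Require Import all_boot all_order all_algebra.
From mathcomp Require Import all_classical all_reals topology normedtype derive.
Import numFieldNormedType.Exports.
Import Order.TTheory GRing.Theory Num.Theory.

Set Implicit Arguments.
Unset Strict Implicit.
Unset Printing Implicit Defensive.

Local Open Scope classical_set_scope.
Local Open Scope ring_scope.

Section Defs.
Variable R : realType.

Section GroupDefs.
Variable G : groupType.

Definition is_subgroup (H : set G) : Prop :=
  H 1%g /\ (forall x y, H x -> H y -> H (x * y)%g) /\ (forall x, H x -> H (x^-1)%g).

Definition generated (S : set G) : set G :=
  fun x => forall H, is_subgroup H -> S `<=` H -> H x.

Definition is_normal_subgroup (H : set G) : Prop :=
  is_subgroup H /\ forall g h, H h -> H (g^-1 * h * g)%g.
End GroupDefs.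

Section MetricDefs.
Variable G : groupType.
Variable d : G -> G -> R.

Definition is_metric : Prop :=
  (forall x y, 0 <= d x y) /\ (forall x y, d x y = 0 <-> x = y) /\
  (forall x y, d x y = d y x) /\ (forall x y z, d x z <= d x y + d y z).

Definition left_invariant : Prop := forall g x y, d (g * x)%g (g * y)%g = d x y.

Definition mball (x : G) (r : R) : set G := fun y => d x y < r.

Definition d_open (S : set G) : Prop :=
  forall x, S x -> exists2 eps, 0 < eps & mball x eps `<=` S.

Definition d_connected (S : set G) : Prop :=
  forall A B : set G, d_open A -> d_open B -> S `<=` A `|` B ->
    S `&` A `&` B = set0 -> S `<=` A \/ S `<=` B.

Definition d_component (x : G) : set G :=
  fun y => exists S, [/\ d_connected S, S x & S y].

Definition d_topological_group : Prop :=
  (forall x y eps, 0 < eps -> exists2 del, 0 < del &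
     forall x' y', d x x' < del -> d y y' < del -> d (x * y)%g (x' * y')%g < eps) /\
  (forall x eps, 0 < eps -> exists2 del, 0 < del &
     forall x', d x x' < del -> d (x^-1)%g (x'^-1)%g < eps).
End MetricDefs.

Fixpoint iterD m k (vs : seq 'rV[R]_m) (f : 'rV[R]_m -> 'rV[R]_k) : 'rV[R]_m -> 'rV[R]_k :=
  match vs with
  | [::] => f
  | v :: vs' => fun x => 'D_v (iterD vs' f) x
  end.

Definition smooth_on m k (A : set 'rV[R]_m) (f : 'rV[R]_m -> 'rV[R]_k) : Prop :=
  forall (vs : seq 'rV[R]_m) x, A x ->
    {for x, continuous (iterD vs f)} /\ forall v, derivable (iterD vs f) x v.

Definition is_lie_group (G : groupType) (d : G -> G -> R) : Prop :=
  d_topological_group d /\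
  exists (n : nat) (I : Type) (U : I -> set G)
         (phi : I -> G -> 'rV[R]_n) (psi : I -> 'rV[R]_n -> G),
  let V a := phi a @` U a in
     (forall x, exists a, U a x) /\
     (forall a, d_open d (U a) /\ open (V a)) /\
     (forall a x, U a x -> psi a (phi a x) = x) /\
     (forall a x eps, U a x -> 0 < eps -> exists2 del, 0 < del &
         forall y, U a y -> d x y < del -> `|phi a y - phi a x| < eps) /\
     (forall a u eps, V a u -> 0 < eps -> exists2 del, 0 < del &
         forall w, V a w -> `|w - u| < del -> d (psi a u) (psi a w) < eps) /\
     (forall a b, smooth_on (phi a @` (U a `&` U b)) (fun u => phi b (psi a u))) /\
      (* smooth multiplication in charts *)
     (forall a b c, smooth_on
        [set w : 'rV[R]_(n + n) | [/\ V a (lsubmx w), V b (rsubmx w) &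
                                    U c (psi a (lsubmx w) * psi b (rsubmx w))%g]]
        (fun w => phi c (psi a (lsubmx w) * psi b (rsubmx w))%g)) /\
     (forall a b, smooth_on [set u | V a u /\ U b ((psi a u)^-1)%g]
        (fun u => phi b ((psi a u)^-1)%g)).

Definition discrete_approximation (Gam : groupType) (d : Gam -> Gam -> R)
  (Gi : nat -> groupType) (f : forall i, Gi i -> Gam) : Prop :=
  (exists2 R0, 0 < R0 & exists i1, forall i, (i1 <= i)%N ->
     generated (f i @^-1` mball d 1%g R0) = setT /\ (f i @^-1` mball d 1%g R0) 1%g) /\
  forall Rr eps, 0 < Rr -> 0 < eps -> exists i0, forall i, (i0 <= i)%N ->
    [/\ finite_set (f i @^-1` mball d 1%g Rr),
        (forall x, mball d 1%g Rr x -> exists g, d (f i g) x < eps) &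
        (forall g1 g2, (f i @^-1` mball d 1%g Rr) g1 -> (f i @^-1` mball d 1%g Rr) g2 ->
           d (f i (g1 * g2^-1)%g) (f i g1 * f i (g2^-1))%g <= eps)].

End Defs.

From HB Require Import structures.
From mathcomp Require Import all_boot all_order all_algebra.
From mathcomp Require Import all_classical all_reals topology normedtype derive.
From mathcomp Require Import lra.
Import Order.TTheory GRing.Theory Num.Theory.
Local Open Scope classical_set_scope.
Local Open Scope ring_scope.
Set Implicit Arguments.
Unset Strict Implicit.

(* For large i the map f_i is an eps-almost morphism on a large ball.  Since
   B_e(r) lies in the identity component, every point of B_e(r) is joined to e
   by a chain of small steps inside a fixed bounded ball; lifting such a chain
   through f_i writes every generator s of G_i as a product of elements u with
   f_i u tiny.  For such u and any t with f_i t in B_e(R_0 + 1),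
   f_i (t^-1 u t) is close to f_i(t)^-1 f_i(u) f_i(t), which lies in B_e(r) by
   uniform continuity of right translations on bounded sets; hence
   t^-1 G_i t <= G_i.  The elements t with f_i t in B_e(R_0) generate Gamma_i,
   so G_i is normal.  Compactness of balls is replaced throughout by the finite
   nets that the discrete approximation provides. *)

Section FiniteBounds.
Variable R : realType.

Lemma finite_common_bound (T : Type) (F : set T) (P : T -> R -> Prop) :
  finite_set F ->
  (forall n M M', 0 < M -> M <= M' -> P n M -> P n M') ->
  (forall n, F n -> exists2 M, 0 < M & P n M) ->
  exists2 M, 0 < M & forall n, F n -> P n M.
Proof.
elim/Peq: T => T in F P *; move=> /finite_seqP [s ->] P_up P_ex.
elim: s P_ex => [|a s IH] P_ex; first by exists 1.
have [M1 M1_pos HM1] : exists2 M, 0 < M & forall n, [set` s] n -> P n M.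
  by apply: IH => n ns; apply: P_ex; rewrite /= in_cons ns orbT.
have [M2 M2_pos HM2] := P_ex a (mem_head a s).
exists (Num.max M1 M2); first by rewrite lt_max M1_pos.
move=> n /=; rewrite in_cons => /orP [/eqP -> | ns].
  by apply: (P_up _ M2) => //; rewrite le_max lexx orbT.
by apply: (P_up _ M1 _ M1_pos _ (HM1 _ ns)); rewrite le_max lexx.
Qed.

Lemma finite_common_radius (T : Type) (F : set T) (P : T -> R -> Prop) :
  finite_set F ->
  (forall n e e', 0 < e' -> e' <= e -> P n e -> P n e') ->
  (forall n, F n -> exists2 e, 0 < e & P n e) ->
  exists2 e, 0 < e & forall n, F n -> P n e.
Proof.
move=> finF P_down P_ex.
have [|n Fn|M M_pos HM] := @finite_common_bound _ F (fun n M => P n M^-1) finF.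
- move=> n M M' M_pos le_MM' /P_down; apply.
    by rewrite invr_gt0 (lt_le_trans M_pos).
  by rewrite lef_pV2 ?posrE // (lt_le_trans M_pos).
- by have [e e_pos Pe] := P_ex n Fn; exists e^-1; rewrite ?invr_gt0 ?invrK.
- by exists M^-1; rewrite ?invr_gt0.
Qed.

End FiniteBounds.

Section Generation.
Variable G : groupType.
Implicit Types (S K : set G) (t : G).

Lemma generated_subgroup S : is_subgroup (generated S).
Proof.
split; first by move=> K [K1 _].
split=> [x y Sx Sy | x Sx] K K_sub SK; have [_ [KM KV]] := K_sub.
  by apply: KM; [apply: Sx | apply: Sy].
by apply: KV; apply: Sx.
Qed.

Lemma sub_generated S : S `<=` generated S.
Proof. by move=> x Sx K _; apply. Qed.

Lemma conjg_mulg t a b : (t^-1 * (a * b) * t = (t^-1 * a * t) * (t^-1 * b * t))%g.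
Proof. by rewrite !mulgA mulgK. Qed.

Lemma subgroup_conj_preimage K t :
  is_subgroup K -> is_subgroup [set h | K (t^-1 * h * t)%g].
Proof.
move=> [K1 [KM KV]]; split; first by rewrite /= mulg1 mulVg.
split=> [a b Ka Kb | a Ka] /=; first by rewrite conjg_mulg; apply: KM.
have -> : (t^-1 * a^-1 * t = (t^-1 * a * t)^-1)%g by rewrite !invgM invgK mulgA.
exact: KV.
Qed.

Lemma normal_of_generating_set K S : is_subgroup K -> generated S = setT ->
  (forall t h, S t -> K h -> K (t^-1 * h * t)%g /\ K (t * h * t^-1)%g) ->
  is_normal_subgroup K.
Proof.
move=> K_sub S_gen S_conj; split=> // g h Kh.
pose N := [set g | forall h, K h -> K (g^-1 * h * g)%g /\ K (g * h * g^-1)%g].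
have N_sub : is_subgroup N.
  split; first by move=> k Kk; rewrite invg1 mul1g mulg1.
  split=> [a b Na Nb k Kk | a Na k Kk].
    have -> : ((a * b)^-1 * k * (a * b) = b^-1 * (a^-1 * k * a) * b)%g.
      by rewrite invgM !mulgA.
    have -> : ((a * b) * k * (a * b)^-1 = a * (b * k * b^-1) * a^-1)%g.
      by rewrite invgM !mulgA.
    by split; [apply: (Nb _ (Na _ Kk).1).1 | apply: (Na _ (Nb _ Kk).2).2].
  by rewrite invgK; have [] := Na k Kk.
have /(_ _ N_sub) : generated S g by rewrite S_gen.
by move=> /(_ (fun t St k Kk => S_conj t k St Kk)) /(_ h Kh) [].
Qed.

End Generation.

Section LeftInvariantMetric.
Variables (R : realType) (G : groupType) (d : G -> G -> R).
Hypotheses (d_metric : is_metric d) (d_linv : left_invariant d).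

Lemma d_ge0 x y : 0 <= d x y. Proof. by case: d_metric. Qed.
Lemma dxx x : d x x = 0. Proof. by case: d_metric => _ [/(_ x x) [_ ->]]. Qed.
Lemma dC x y : d x y = d y x. Proof. by case: d_metric => _ [_ []]. Qed.
Lemma d_triangle x y z : d x z <= d x y + d y z.
Proof. by case: d_metric => _ [_ []]. Qed.

Lemma d1V_mul a b : d a b = d 1%g (a^-1 * b)%g.
Proof. by rewrite -(d_linv (a^-1)%g) mulVg. Qed.

Lemma d1_mul a b : d 1%g (a * b)%g <= d 1%g a + d 1%g b.
Proof. by apply: le_trans (d_triangle _ a _) _; rewrite -{2}[a]mulg1 d_linv. Qed.

Definition balls_totally_bounded : Prop :=
  forall Rr eps, 0 < Rr -> 0 < eps -> exists2 N : set G, finite_set N &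
    forall x, d 1%g x < Rr -> exists2 y, N y & d y x < eps.

Lemma approximation_balls_totally_bounded (Gi : nat -> groupType)
    (f : forall i, Gi i -> G) :
  discrete_approximation d f -> balls_totally_bounded.
Proof.
move=> [_ approx] Rr eps Rr_pos eps_pos.
have [j /(_ j (leqnn j)) [fin dense _]] := approx (Rr + eps) eps
  ltac:(lra) eps_pos.
exists (f j @` (f j @^-1` mball d 1%g (Rr + eps))); first exact: finite_image.
move=> x x_Rr; have [g fg_x] := dense x ltac:(rewrite /mball; lra).
exists (f j g) => //; exists g => //; rewrite /= /mball.
by have := d_triangle 1%g x (f j g); rewrite (dC x); lra.
Qed.

Lemma right_mul_uniform : d_topological_group d -> balls_totally_bounded ->
  forall Rr eta, 0 < Rr -> 0 < eta -> exists2 rho, 0 < rho &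
    forall z w, d 1%g z < Rr -> d 1%g w < rho -> d z (w * z)%g < eta.
Proof.
move=> [mul_cont _] nets Rr eta Rr_pos eta_pos.
have [N finN N_dense] := nets Rr (eta / 4) Rr_pos ltac:(lra).
have [|y _|rho rho_pos N_rho] := @finite_common_radius R _ N
    (fun y e => forall w, d 1%g w < e -> d y (w * y)%g < eta / 2) finN.
- by move=> y e e' _ le_e'e + w w_e'; apply; apply: lt_le_trans le_e'e.
- have [e e_pos cont_e] := mul_cont 1%g y (eta / 2) ltac:(lra).
  exists e => // w w_e; have := cont_e w y w_e; rewrite mul1g dxx; exact.
exists rho => // z w z_Rr w_rho; have [y Ny yz] := N_dense z z_Rr.
have := N_rho y Ny w w_rho; have := d_triangle z y (w * z)%g.
have := d_triangle y (w * y)%g (w * z)%g; rewrite d_linv (dC z y); lra.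
Qed.

Inductive reachable (A : set G) (del : R) : G -> Prop :=
| reachable1 : reachable A del 1%g
| reachable_step p q : reachable A del p -> A q -> d p q < del -> reachable A del q.

Lemma reachable_sub A B del y : A `<=` B -> reachable A del y -> reachable B del y.
Proof.
move=> AB; elim=> [|p q _ IH Aq dpq]; first exact: reachable1.
exact: reachable_step IH (AB _ Aq) dpq.
Qed.

Lemma reachable_ball Rr del y : 0 < Rr ->
  reachable (mball d 1%g Rr) del y -> d 1%g y < Rr.
Proof. by move=> Rr_pos; case=> // *; rewrite dxx. Qed.

Lemma reachable_bounded A del y : reachable A del y ->
  exists2 M, 0 < M & reachable (mball d 1%g M) del y.
Proof.
elim=> [|p q _ [M M_pos IH] Aq dpq]; first by exists 1 => //; apply: reachable1.
exists (Num.max M (d 1%g q + 1)); first by rewrite lt_max M_pos.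
apply: reachable_step (reachable_sub _ IH) _ dpq => [z|].
  by rewrite /mball lt_max => ->.
by rewrite /mball lt_max ltrDl ltr01 orbT.
Qed.

(* The points reachable by [del]-chains and the points [del/2]-close to
   unreachable ones are two open sets splitting [S]. *)
Lemma connected_reachable S del : 0 < del -> d_connected d S -> S 1%g ->
  forall y, S y -> reachable S del y.
Proof.
move=> del_pos S_conn S1.
pose A z := exists2 p, reachable S del p & d p z < del.
pose B z := exists q, [/\ S q, ~ reachable S del q & d q z < del / 2].
have A_open : d_open d A.
  move=> z [p rp dpz]; exists (del - d p z); first by rewrite subr_gt0.
  move=> w dzw; exists p => //.
  by apply: le_lt_trans (d_triangle p z w) _; rewrite -ltrBrDl.
have B_open : d_open d B.
  move=> z [q [Sq nq dqz]]; exists (del / 2 - d q z); first by rewrite subr_gt0.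
  move=> w dzw; exists q; split => //.
  by apply: le_lt_trans (d_triangle q z w) _; rewrite -ltrBrDl.
have S_AB : S `<=` A `|` B.
  move=> z Sz; have [rz|nz] := pselect (reachable S del z).
    by left; exists z; rewrite ?dxx.
  by right; exists z; rewrite dxx; split => //; rewrite divr_gt0.
have AB_disj : S `&` A `&` B = set0.
  apply/seteqP; split => // z [[Sz [p rp dpz]] [q [Sq nq dqz]]].
  apply: nq; apply: reachable_step (reachable_step rp Sz dpz) Sq _.
  by rewrite dC; lra.
have [SA | SB] := S_conn A B A_open B_open S_AB AB_disj.
  by move=> y Sy; have [p rp dpy] := SA y Sy; apply: reachable_step rp Sy dpy.
have [q [Sq nq dq1]] := SB _ S1.
by exfalso; apply: nq; apply: reachable_step (reachable1 S del) Sq _; rewrite dC; lra.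
Qed.

Lemma chain_radius : balls_totally_bounded ->
  forall r del, 0 < r -> 0 < del -> mball d 1%g r `<=` d_component d 1%g ->
  exists2 R1, 0 < R1 & forall y, d 1%g y < r -> reachable (mball d 1%g R1) del y.
Proof.
move=> nets r del r_pos del_pos r_comp.
have [N finN N_dense] := nets r (del / 2) r_pos ltac:(lra).
have [|n _|M M_pos N_M] := @finite_common_bound R _ N (fun n M =>
    forall y, d 1%g y < r -> d n y < del / 2 -> reachable (mball d 1%g M) del y) finN.
- move=> n M M' _ le_MM' + y yr ny => /(_ y yr ny); apply: reachable_sub => z.
  by rewrite /mball => /lt_le_trans; apply.
- have [[y0 [y0r ny0]] | no_y0] :=
    pselect (exists y0, d 1%g y0 < r /\ d n y0 < del / 2); last first.
    by exists 1 => // y yr ny; exfalso; apply: no_y0; exists y.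
  have [S [S_conn S1 Sy0]] := r_comp y0 y0r.
  have [M M_pos y0_M] :=
    reachable_bounded (connected_reachable del_pos S_conn S1 Sy0).
  exists (Num.max M r) => [|y yr ny]; first by rewrite lt_max M_pos.
  apply: reachable_step (reachable_sub _ y0_M) _ _ => [z||].
  + by rewrite /mball lt_max => ->.
  + by rewrite /mball lt_max yr orbT.
  + have := d_triangle y0 n y; rewrite (dC y0 n); lra.
exists M => // y yr; have [n Nn ny] := N_dense y yr.
exact: N_M n Nn y yr ny.
Qed.

Section AlmostMorphism.
Variables (H : groupType) (f : H -> G) (K eps : R).
Hypothesis f1_K : d 1%g (f 1%g) < K.
Hypothesis f_almost : forall g1 g2, d 1%g (f g1) < K -> d 1%g (f g2) < K ->
  d (f (g1 * g2^-1)%g) (f g1 * f (g2^-1))%g <= eps.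

Lemma almost_morph1 : d 1%g (f 1%g) <= eps.
Proof.
have := f_almost f1_K f1_K; rewrite invg1 mulg1.
by rewrite -{1}[f 1%g]mulg1 d_linv.
Qed.

Lemma almost_morphV a : d 1%g (f a) < K -> d 1%g (f a^-1) <= d 1%g (f a) + 2 * eps.
Proof.
move=> a_K; have := f_almost a_K a_K; rewrite mulgV => aai.
have f1_eps := almost_morph1; rewrite -(d_linv (f a)) mulg1.
have := d_triangle (f a) 1%g (f a * f a^-1)%g.
have := d_triangle 1%g (f 1%g) (f a * f a^-1)%g.
rewrite (dC (f a) 1%g); lra.
Qed.

Lemma almost_morphVV a : d 1%g (f a) < K -> d 1%g (f a^-1) < K ->
  d (f a) ((f a^-1)^-1)%g <= 2 * eps.
Proof.
move=> a_K ai_K; have := f_almost ai_K ai_K; rewrite invgK mulVg => aia.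
have f1_eps := almost_morph1; rewrite -(d_linv (f a^-1)) mulgV.
have := d_triangle (f a^-1 * f a)%g (f 1%g) 1%g.
rewrite (dC _ (f 1%g)) (dC (f 1%g) 1%g); lra.
Qed.

Lemma almost_morphM a b : d 1%g (f a) < K -> d 1%g (f b^-1) < K ->
  d 1%g (f (a * b)%g) <= d 1%g (f a) + d 1%g (f b) + eps.
Proof.
move=> a_K bi_K; have := f_almost a_K bi_K; rewrite invgK.
have := d_triangle 1%g (f a * f b)%g (f (a * b)%g).
have := d1_mul (f a) (f b); rewrite (dC (f a * f b)%g); lra.
Qed.

Lemma almost_morph_divl a b : 0 < eps ->
  d 1%g (f a) + 2 * eps < K -> d 1%g (f b) + 2 * eps < K ->
  d 1%g (f (a^-1 * b)%g) <= d (f a) (f b) + 3 * eps.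
Proof.
move=> eps_pos a_K b_K; have a_K' : d 1%g (f a) < K by lra.
have b_K' : d 1%g (f b) < K by lra.
have ai_K : d 1%g (f a^-1) < K by have := almost_morphV a_K'; lra.
have bi_K : d 1%g (f b^-1) < K by have := almost_morphV b_K'; lra.
have := f_almost ai_K bi_K; rewrite invgK.
have := almost_morphVV a_K' ai_K.
have := d_triangle 1%g (f a^-1 * f b)%g (f (a^-1 * b)%g).
have -> : d 1%g (f a^-1 * f b)%g = d ((f a^-1)^-1)%g (f b).
  by rewrite [RHS]d1V_mul invgK.
have := d_triangle ((f a^-1)^-1)%g (f a) (f b).
rewrite (dC (f a^-1 * f b)%g) (dC _ (f a)); lra.
Qed.

Lemma almost_morph_conj t u : 0 < eps -> d 1%g (f t) + d 1%g (f u) + 5 * eps < K ->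
  d 1%g (f (t^-1 * u * t)%g) <= d (f t) (f u * f t)%g + 4 * eps.
Proof.
move=> eps_pos tu_K; have := d_ge0 1%g (f t); have := d_ge0 1%g (f u) => u_ge0 t_ge0.
have t_K : d 1%g (f t) < K by lra.
have u_K : d 1%g (f u) < K by lra.
have ti_K : d 1%g (f t^-1) < K by have := almost_morphV t_K; lra.
have ut_bd := almost_morphM u_K ti_K.
have ut_K : d 1%g (f (u * t)%g) < K by lra.
have uti_K : d 1%g (f (u * t)^-1)%g < K by have := almost_morphV ut_K; lra.
have := f_almost ti_K uti_K; rewrite invgK mulgA.
have := f_almost u_K ti_K; rewrite invgK.
have := almost_morphVV t_K ti_K.
have := d_triangle 1%g (f t^-1 * f (u * t))%g (f (t^-1 * u * t)%g).
have -> : d 1%g (f t^-1 * f (u * t))%g = d ((f t^-1)^-1)%g (f (u * t)%g).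
  by rewrite [RHS]d1V_mul invgK.
have := d_triangle ((f t^-1)^-1)%g (f t) (f (u * t)%g).
have := d_triangle (f t) (f u * f t)%g (f (u * t)%g).
rewrite (dC (f t^-1 * f (u * t))%g) (dC _ (f t)) (dC (f u * f t)%g); lra.
Qed.

Lemma chain_lift R1 del rho : 0 < eps -> 0 < R1 -> R1 + 3 * eps < K ->
  0 < del -> del + 5 * eps <= rho ->
  (forall x, d 1%g x < R1 -> exists g, d (f g) x < eps) ->
  forall p, reachable (mball d 1%g R1) del p ->
  forall g, d (f g) p < eps -> generated (f @^-1` mball d 1%g rho) g.
Proof.
move=> eps_pos R1_pos R1_K del_pos del_rho f_dense.
have [_ [GM _]] := generated_subgroup (f @^-1` mball d 1%g rho).
move=> p; elim=> {p} [|p q p_reach IH q_R1 dpq] g gp.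
  by apply: sub_generated; rewrite /= /mball dC; lra.
have p_R1 := reachable_ball R1_pos p_reach; have [g' g'p] := f_dense p p_R1.
rewrite -(mulVKg g' g); apply: GM (IH _ g'p) (sub_generated _); rewrite /= /mball.
move: q_R1; rewrite /mball => q_R1.
have g'_K : d 1%g (f g') + 2 * eps < K.
  by have := d_triangle 1%g p (f g'); rewrite (dC p); lra.
have g_K : d 1%g (f g) + 2 * eps < K.
  by have := d_triangle 1%g q (f g); rewrite (dC q); lra.
have := almost_morph_divl eps_pos g'_K g_K.
have := d_triangle (f g') p (f g); have := d_triangle p q (f g).
rewrite (dC q); lra.
Qed.

Lemma generated_conj_closed r eta rho R2 : 0 < eps ->
  (forall z w, d 1%g z < R2 -> d 1%g w < rho -> d z (w * z)%g < eta) ->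
  eta + 4 * eps <= r -> R2 + rho + 5 * eps < K ->
  f @^-1` mball d 1%g r `<=` generated (f @^-1` mball d 1%g rho) ->
  forall t h, d 1%g (f t) < R2 -> generated (f @^-1` mball d 1%g r) h ->
    generated (f @^-1` mball d 1%g r) (t^-1 * h * t)%g.
Proof.
move=> eps_pos right_mul eta_r R2_K r_rho t h t_R2 Gh.
apply: (Gh _ (generated_subgroup _) r_rho [set h | generated _ (t^-1 * h * t)%g]).
  exact/subgroup_conj_preimage/generated_subgroup.
move=> u; rewrite /preimage /mball /= => u_rho.
apply: sub_generated; rewrite /= /mball.
have tu_K : d 1%g (f t) + d 1%g (f u) + 5 * eps < K by lra.
have := right_mul _ _ t_R2 u_rho; have := almost_morph_conj eps_pos tu_K; lra.
Qed.

Lemma generated_ball_normal R0 R1 rho r : 0 < eps -> 0 < R0 -> 0 < R1 ->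
  eps <= rho / 20 -> eps <= r / 8 -> eps <= 1 / 4 -> R0 + R1 + rho + 3 <= K ->
  generated (f @^-1` mball d 1%g R0) = setT ->
  (forall x, mball d 1%g K x -> exists g, d (f g) x < eps) ->
  (forall z w, d 1%g z < R0 + 1 -> d 1%g w < rho -> d z (w * z)%g < r / 2) ->
  (forall y, d 1%g y < r -> reachable (mball d 1%g R1) (rho / 2) y) ->
  is_normal_subgroup (generated (f @^-1` mball d 1%g r)).
Proof.
move=> eps_pos R0_pos R1_pos eps_rho eps_r eps_1 K_big gen_R0 f_dense right_mul chains.
have R1_K : R1 + 3 * eps < K by lra.
have [del_pos del_rho] : 0 < rho / 2 /\ rho / 2 + 5 * eps <= rho by split; lra.
have f_dense_R1 x : d 1%g x < R1 -> exists g, d (f g) x < eps.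
  by move=> x_R1; apply: f_dense; rewrite /mball; lra.
have r_rho : f @^-1` mball d 1%g r `<=` generated (f @^-1` mball d 1%g rho).
  move=> s s_r; apply: (chain_lift eps_pos R1_pos R1_K del_pos del_rho f_dense_R1
    (chains _ s_r)).
  by rewrite dxx.
have eta_r : r / 2 + 4 * eps <= r by lra.
have R2_K : R0 + 1 + rho + 5 * eps < K by lra.
have conj_closed := generated_conj_closed eps_pos right_mul eta_r R2_K r_rho.
apply: normal_of_generating_set gen_R0 _ => [|t h + Gh].
  exact: generated_subgroup.
rewrite /preimage /mball /= => t_R0.
have t_K : d 1%g (f t) < K by lra.
have := almost_morphV t_K => ti_bound.
by rewrite -{3}[t]invgK; split; apply: conj_closed => //; lra.
Qed.

End AlmostMorphism.
End LeftInvariantMetric.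

Unset Implicit Arguments.
Set Strict Implicit.

Theorem mainTheorem13 (R : realType) (Gam : groupType) (d : Gam -> Gam -> R)
  (d_metric : is_metric d) (d_linv : left_invariant d) (lie : is_lie_group d)
  (Gi : nat -> groupType) (f : forall i, Gi i -> Gam)
  (approx : discrete_approximation d f)
  (r : R) (r_pos : 0 < r) (r_small : mball d 1%g r `<=` d_component d 1%g) :
  exists i0, forall i, (i0 <= i)%N ->
    is_normal_subgroup (generated (f i @^-1` mball d 1%g r)).
Proof.
have nets := approximation_balls_totally_bounded d_metric approx.
have [top_group _] := lie.
have [[R0 R0_pos [i1 gen_i1]] approx_i] := approx.
have [rho rho_pos right_mul] := right_mul_uniform d_metric d_linv top_group nets
  (Rr := R0 + 1) (eta := r / 2) ltac:(lra) ltac:(lra).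
have [R1 R1_pos chains] :=
  chain_radius d_metric nets r_pos (del := rho / 2) ltac:(lra) r_small.
pose eps := Num.min (rho / 20) (Num.min (r / 8) (1 / 4)).
have eps_pos : 0 < eps by rewrite !lt_min !divr_gt0.
have [eps_rho eps_r eps_1] : [/\ eps <= rho / 20, eps <= r / 8 & eps <= 1 / 4].
  by rewrite !ge_min !lexx !orbT.
pose K := R0 + R1 + rho + 3.
have [i0 approx_i0] := approx_i K eps ltac:(rewrite /K; lra) eps_pos.
exists (maxn i0 i1) => i; rewrite geq_max => /andP [i0_i i1_i].
have [_ f_dense f_almost] := approx_i0 i i0_i.
have [gen_R0 one_R0] := gen_i1 i i1_i.
have f1_K : d 1%g (f i 1%g) < K.
  by move: one_R0; rewrite /preimage /mball /K /=; lra.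
exact: (generated_ball_normal d_metric d_linv f1_K f_almost eps_pos R0_pos R1_pos
  eps_rho eps_r eps_1 (lexx K) gen_R0 f_dense right_mul chains).
Qed.
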